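(* Let $m\ge 2$ and let $\tau=\tau_1\tau_2\cdots\tau_k$ be a partition with exactly $m$ blocks such that $\tau_i=i$ for each $i\in[m-1]$. Then \[\sum_{n\ge0}p_n(12\cdots(m+1),\tau)x^n=\sum_{n\ge0}p_n(12\cdots(m+1))x^n-\left(\frac{x}{1-(m-1)x}\right)^{k-m}\frac{x}{1-mx}\prod_{j=1}^{m-1}\frac{x}{1-jx}.\] In particular this generating function depends only on $k$ and $m$, not on $\tau$ itself.
   Context: Set partitions of $[n]$ are represented by canonical sequential forms (restricted growth words): $\pi=\pi_1\cdots\pi_n$ with $\pi_1=1$, $\pi_{i+1}\le\max(\pi_1,\dots,\pi_i)+1$, where $\pi_j$ is the index of the block containing $j$ and blocks are ordered by their minima; the empty partition is the unique partition of $[0]$. $\pi$ contains a pattern $\tau$ if some subsequence of $\pi$ is order-isomorphic to $\tau$, and avoids it otherwise. $p_n(T)$ denotes the number of partitions of $[n]$ avoiding all patterns in $T$. *)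

From HB Require Import structures.
From mathcomp Require Import all_boot all_order all_algebra.
Set Implicit Arguments. Unset Strict Implicit. Unset Printing Implicit Defensive.
Import Order.TTheory GRing.Theory Num.Theory.

(* Restricted growth words (canonical sequential forms), letters start at 1.
   rgw_aux mx s : s continues a word whose current maximum is mx. *)
Fixpoint rgw_aux (mx : nat) (s : seq nat) : bool :=
  match s with
  | [::] => true
  | x :: s' => (0 < x) && (x <= mx.+1) && rgw_aux (maxn mx x) s'
  end.

Definition is_rgw (s : seq nat) : bool := rgw_aux 0 s.

Definition nblocks (s : seq nat) : nat := \max_(x <- s) x.

Definition order_iso (s t : seq nat) : bool :=
  (size s == size t) &&
  [forall i : 'I_(size s), forall j : 'I_(size s),
     (nth 0 s i < nth 0 s j) == (nth 0 t i < nth 0 t j)].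

Definition contains (pi tau : seq nat) : bool :=
  [exists b : (size pi).-tuple bool, order_iso (mask b pi) tau].

Definition avoids_all (pi : seq nat) (T : seq (seq nat)) : bool :=
  all (fun tau => ~~ contains pi tau) T.

(* p_n(T): number of set partitions of [n] (RGWs of length n) avoiding all of T.
   Letters of an RGW of length n lie in [1..n], so n-tuples over 'I_n.+1 suffice. *)
Definition pn (n : nat) (T : seq (seq nat)) : nat :=
  #|[pred t : n.-tuple 'I_n.+1 |
      is_rgw (map val t) && avoids_all (map val t) T]|.

Definition incr (m : nat) : seq nat := iota 1 m.+1.

Local Open Scope ring_scope.
Definition denom (m k : nat) : {poly int} :=
  (1 - (m.-1)%:R *: 'X) ^+ (k - m)%N * (1 - m%:R *: 'X) *
  \prod_(1 <= j < m) (1 - j%:R *: 'X).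

From HB Require Import structures.
From mathcomp Require Import all_boot all_order all_algebra.
From mathcomp Require Import zify ring.
Import Order.TTheory GRing.Theory Num.Theory.

Set Implicit Arguments.
Unset Strict Implicit.
Unset Printing Implicit Defensive.

(* A restricted growth word avoids 12...(m+1) iff all
      its letters are <= m; for such a word, containing tau (which uses every
      letter 1..m) is the same as having tau as a literal subsequence, because
      an order-isomorphic copy of tau with letters in [1..m] is tau itself.
   2. Counting.  Hence the difference p_n(12..(m+1)) - p_n(12..(m+1), tau)
      counts the words of length n with letters <= m containing tau as a
      subsequence.  Reading letters one at a time and matching tau greedily,
      this number satisfies a recursion on the state (current maximum M,
      still-unmatched suffix u of tau).
   3. Generating functions.  Working with power series truncated at x^N, the
      recursion becomes a system of linear equations in the generating
      functions gf M u.  Solving it along the path followed by tau (new blocks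
      1..m-1, then a tail in which the maximum m-1 or m is irrelevant, then the
      saturated phase with maximum m) yields the product formula. *)

Lemma nblocks_cons x s : nblocks (x :: s) = maxn x (nblocks s).
Proof. by rewrite /nblocks big_cons. Qed.

Lemma mem_nblocks x s : x \in s -> x <= nblocks s.
Proof. by move=> xs; rewrite (@leq_bigmax_seq _ s predT id). Qed.

Lemma rgw_pos M s : rgw_aux M s -> {in s, forall x, 0 < x}.
Proof.
elim: s M => [|y s IH] M //= /andP[/andP[y0 _] hs] x.
by rewrite in_cons => /predU1P[-> // | /(IH _ hs)].
Qed.

Lemma rgw_iota M s : rgw_aux M s -> subseq (iota M.+1 (nblocks s - M)) s.
Proof.
elim: s M => [|x s IH] M /=; first by rewrite /nblocks big_nil sub0n.
move=> /andP[/andP[x0 xM] /IH]; rewrite nblocks_cons.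
case: (ltngtP x M.+1) xM => // [xlt _|-> _].
  have -> : maxn M x = M by lia.
  have -> : maxn x (nblocks s) - M = nblocks s - M by lia.
  by move=> hs; apply: subseq_trans hs (subseq_cons _ _).
have -> : maxn M M.+1 = M.+1 by lia.
case E: (maxn M.+1 (nblocks s) - M) => [|K] //=.
have -> : nblocks s - M.+1 = K by lia.
by rewrite eqxx.
Qed.

Lemma mem_rgw_blocks s v : is_rgw s -> 0 < v <= nblocks s -> v \in s.
Proof.
move=> hs hv; apply: (mem_subseq (@rgw_iota 0 s hs)).
by rewrite subn0 mem_iota; lia.
Qed.

Lemma subseq_contains s t : subseq t s -> contains s t.
Proof.
case/subseqP => b sb ->; apply/existsP; exists (Tuple (introT eqP sb)).
by rewrite /order_iso /= eqxx; apply/forallP => i; apply/forallP => j.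
Qed.

Lemma order_isoP w t : order_iso w t ->
  size w = size t /\ forall i j, i < size w -> j < size w ->
     (nth 0 w i < nth 0 w j) = (nth 0 t i < nth 0 t j).
Proof.
case/andP => /eqP -> /forallP H; split=> // i j hi hj.
by move: (H (Ordinal hi)) => /forallP /(_ (Ordinal hj)) /eqP.
Qed.

(* A restricted growth word avoids 12...(m+1) iff its letters are <= m:
   a letter m+1 gives the occurrence 1 2 ... (m+1) of first occurrences,
   and an occurrence forces its i-th letter to exceed i. *)
Lemma avoid_incr m s : is_rgw s -> ~~ contains s (incr m) = all (fun x => x <= m) s.
Proof.
move=> hs; apply/idP/idP.
  apply: contraR => /allPn [x xs xm]; apply: subseq_contains.
  apply: subseq_trans (@rgw_iota 0 s hs); rewrite subn0 /incr.
  have -> : nblocks s = m.+1 + (nblocks s - m.+1) by have := mem_nblocks xs; lia.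
  by rewrite iotaD prefix_subseq.
move=> /allP sm; apply/negP => /existsP [b] /order_isoP [].
rewrite /incr size_iota => sw H.
have wpos y : y \in mask b s -> 0 < y by move/mem_mask; apply: (@rgw_pos 0 s hs).
have up i : i <= m -> i < nth 0 (mask b s) i.
  elim: i => [|i IH] im; first by apply/wpos/mem_nth; rewrite sw.
  apply: leq_ltn_trans (IH (ltnW im)) _.
  by rewrite H ?sw ?nth_iota //; lia.
have := up m (leqnn m).
by rewrite ltnNge sm // (mem_mask (m := b)) // mem_nth // sw.
Qed.

Lemma incr_selfmap_id m (g : nat -> nat) :
  (forall v, 0 < v <= m -> 0 < g v <= m) ->
  (forall v v', 0 < v -> v < v' <= m -> g v < g v') ->
  forall v, 0 < v <= m -> g v = v.
Proof.
move=> gm g_incr.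
have gap d v : 0 < v -> v + d <= m -> g v + d <= g (v + d).
  elim: d => [|d IH] v0 vd; first by rewrite !addn0.
  have := g_incr (v + d) (v + d).+1 ltac:(lia) ltac:(lia).
  have := IH v0 ltac:(lia); rewrite !addnS; lia.
move=> v hv; apply/eqP; rewrite eqn_leq; apply/andP; split.
  have := gap (m - v) v ltac:(lia) ltac:(lia); rewrite (_ : v + (m - v) = m); last by lia.
  by have := gm m ltac:(lia); lia.
have := gap (v - 1) 1 isT ltac:(lia); rewrite (_ : 1 + (v - 1) = v); last by lia.
by have := gm 1 ltac:(lia); lia.
Qed.

(* A word order-isomorphic to t, both with letters in [1..m] and t using
   every letter of [1..m], equals t: the letter of w at the position of the
   first v of t defines an increasing self-map of [1..m]. *)
Lemma order_iso_surj_eq m w t : order_iso w t ->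
  {in w, forall y, 0 < y <= m} -> {in t, forall y, 0 < y <= m} ->
  (forall v, 0 < v <= m -> v \in t) -> w = t.
Proof.
move=> /order_isoP [sw H] wm tm tall.
pose g v := nth 0 w (index v t).
have idx v : 0 < v <= m -> index v t < size w by rewrite sw index_mem => /tall.
have gE v : 0 < v <= m -> g v = v.
  apply: (@incr_selfmap_id m g) => [u hu | u u' u0 hu].
    by apply/wm/mem_nth/idx.
  by rewrite /g H ?idx ?nth_index ?tall //; lia.
apply: (@eq_from_nth _ 0) => // i hi; set v := nth 0 t i.
have hv : 0 < v <= m by apply/tm/mem_nth; rewrite -sw.
have := H i (index v t) hi (idx v hv); have := H (index v t) i (idx v hv) hi.
rewrite nth_index ?tall // ltnn -/(g v) gE //; lia.
Qed.

Lemma contains_subseq m s tau : is_rgw s -> all (fun x => x <= m) s ->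
  is_rgw tau -> nblocks tau = m -> contains s tau = subseq tau s.
Proof.
move=> hs /allP sm ht hn; apply/idP/idP; last exact: subseq_contains.
case/existsP => b iso; rewrite -(@order_iso_surj_eq m _ _ iso) ?mask_subseq //.
- by move=> y /mem_mask ys; rewrite (@rgw_pos 0 s hs) ?sm.
- by move=> y ys; rewrite (@rgw_pos 0 tau ht) // -hn mem_nblocks.
- by move=> v hv; apply: mem_rgw_blocks; rewrite ?hn.
Qed.

Lemma card_sum_indicator (U : finType) (P : pred U) :
  #|[pred t : U | P t]| = \sum_(t : U) (P t : nat).
Proof. by rewrite -sum1_card big_mkcond; apply: eq_bigr => t _; rewrite inE; case: (P t). Qed.

Lemma card_tuple_cons (T : finType) n (Q : seq T -> bool) :
  #|[pred t : n.+1.-tuple T | Q t]| =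
  \sum_(x : T) #|[pred t : n.-tuple T | Q (x :: t)]|.
Proof.
rewrite card_sum_indicator (reindex (fun p : T * n.-tuple T => [tuple of p.1 :: p.2])) /=.
  rewrite -(pair_big predT predT (fun x (t : n.-tuple T) => (Q (x :: t) : nat))).
  by apply: eq_bigr => x _; rewrite card_sum_indicator.
exists (fun t : n.+1.-tuple T => (thead t, [tuple of behead t])).
  by move=> [x t] _; congr (_, _); apply: val_inj.
by move=> t _; rewrite /= -tuple_eta.
Qed.

Lemma sum_ord_range B c (g : nat -> nat) : c < B ->
  \sum_(x < B) (if 0 < x <= c then g x else 0) = \sum_(1 <= x < c.+1) g x.
Proof.
move=> cB; rewrite -(big_mkord predT (fun x => if 0 < x <= c then g x else 0)).
rewrite (big_cat_nat _ (n := c.+1)) //= big_ltn //= add0n [X in _ + X]big1_seq ?addn0.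
  by apply: eq_big_nat => i /andP[i1 ic]; rewrite i1 -ltnS ic.
by move=> i /andP[_]; rewrite mem_index_iota ltnNge => /andP[/negbTE ->]; rewrite andbF.
Qed.

Definition match_next (u : seq nat) (x : nat) : seq nat :=
  if u is t :: u' then (if t == x then u' else u) else u.

Lemma subseq_cons_next u x s : subseq u (x :: s) = subseq (match_next u x) s.
Proof. by case: u => [|t u] //=; rewrite sub0seq. Qed.

(* ncompletions m r M u counts the continuations s of length r of a word of
   maximum M, with letters <= m, such that u is a subsequence of s;
   defined by the recursion on the first letter x (1 <= x <= min (M+1) m). *)
Fixpoint ncompletions (m r M : nat) (u : seq nat) : nat :=
  if r is r'.+1 then
    \sum_(1 <= x < (minn M.+1 m).+1) ncompletions m r' (maxn M x) (match_next u x)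
  else u == [::].

Definition admissible (m M : nat) (u s : seq nat) : bool :=
  [&& rgw_aux M s, all (fun x => x <= m) s & subseq u s].

Lemma admissible_cons m M u x s : admissible m M u (x :: s) =
  (0 < x <= minn M.+1 m) && admissible m (maxn M x) (match_next u x) s.
Proof.
rewrite /admissible subseq_cons_next /= leq_min.
by case: (0 < x); case: (x <= M.+1); case: (x <= m); rewrite ?andbF.
Qed.

Lemma card_admissible m r : forall M u B, minn m (M + r) < B ->
  #|[pred t : r.-tuple 'I_B | admissible m M u (map val t)]| = ncompletions m r M u.
Proof.
elim: r => [|r IH] M u B hB.
  rewrite card_sum_indicator (big_pred1 [tuple]) => [|t]; last exact/esym/eqP/tuple0.
  by rewrite /admissible /=; case: u.
rewrite (card_tuple_cons r (fun s : seq 'I_B => admissible m M u (map val s))) /=.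
have hB' : minn M.+1 m < B by lia.
rewrite -(sum_ord_range (fun x => ncompletions m r (maxn M x) (match_next u x)) hB').
apply: eq_bigr => x _.
have -> : #|[pred t : r.-tuple 'I_B | admissible m M u (map val (x :: t))]| =
    #|[pred t : r.-tuple 'I_B | (0 < x <= minn M.+1 m) &&
        admissible m (maxn M x) (match_next u x) (map val t)]|.
  by apply: eq_card => t; rewrite !inE /= admissible_cons.
case: ifP => hx; last by rewrite card_sum_indicator big1 // => t _; rewrite hx.
by rewrite -(IH _ _ B); [apply: eq_card => t; rewrite !inE /= | lia].
Qed.

(* The words avoiding 12...(m+1) but not tau are exactly the admissible
   words for tau from the empty prefix (maximum 0). *)
Lemma pn_difference m tau n : is_rgw tau -> nblocks tau = m ->
  pn n [:: incr m] = ncompletions m n 0 tau + pn n [:: incr m; tau].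
Proof.
move=> ht hn; rewrite -(card_admissible _ _ (B := n.+1)); last by lia.
rewrite /pn -(cardID [pred t : n.-tuple 'I_n.+1 | subseq tau (map val t)]).
congr (_ + _); apply: eq_card => t; rewrite !inE /= /admissible -/(is_rgw _).
all: case hr: (is_rgw _); rewrite ?andbF //= avoid_incr //.
all: case ha: (all _ _); rewrite ?andbF ?andbT //= (@contains_subseq m) //.
Qed.

Local Open Scope ring_scope.

Section TruncatedEquality.
Variable R : comNzRingType.
Implicit Types p q r : {poly R}.

Definition eqX N p q := forall i, (i < N)%N -> p`_i = q`_i.

Lemma eqX_refl N p : eqX N p p. Proof. by []. Qed.
Lemma eqX_trans N p q r : eqX N p q -> eqX N q r -> eqX N p r.
Proof. by move=> h1 h2 i hi; rewrite h1 ?h2. Qed.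
Lemma eqX_eq N p q : p = q -> eqX N p q. Proof. by move->. Qed.
Lemma eqXD N p q p' q' : eqX N p q -> eqX N p' q' -> eqX N (p + p') (q + q').
Proof. by move=> h1 h2 i hi; rewrite !coefD h1 ?h2. Qed.
Lemma eqXB N p q p' q' : eqX N p q -> eqX N p' q' -> eqX N (p - p') (q - q').
Proof. by move=> h1 h2 i hi; rewrite !coefB h1 ?h2. Qed.
Lemma eqXMl N r p q : eqX N p q -> eqX N (r * p) (r * q).
Proof.
move=> h i hi; rewrite !coefM; apply: eq_bigr => j _; rewrite h //.
exact: leq_ltn_trans (leq_subr _ _) hi.
Qed.
Lemma eqXMr N r p q : eqX N p q -> eqX N (p * r) (q * r).
Proof. by move=> h; rewrite ![_ * r]mulrC; apply: eqXMl. Qed.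

(* 1 - c x is invertible modulo x^N, so it can be cancelled. *)
Lemma eqX_cancel N (c : nat) p q r :
  eqX N (p * (1 - c%:R *: 'X)) r -> eqX N (q * (1 - c%:R *: 'X)) r -> eqX N p q.
Proof.
move=> hp hq; have h := eqXB hp hq; rewrite subrr -mulrBl in h.
have coefE i : ((p - q) * (1 - c%:R *: 'X))`_i = (p - q)`_i - c%:R * ((p - q) * 'X)`_i.
  by rewrite mulrBr mulr1 coefB -scalerAr coefZ.
suff d0 i : (i < N)%N -> (p - q)`_i = 0 by move=> i /d0 /eqP; rewrite coefB subr_eq0 => /eqP.
elim: i => [|i IH] hi.
  by have := h 0%N hi; rewrite coefE coefMX /= mulr0 subr0 coef0.
by have := h i.+1 hi; rewrite coefE coefMX /= IH ?mulr0 ?subr0 ?coef0 // ltnW.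
Qed.

Lemma eqX_solve N (c : nat) r q p : eqX N p (r + 'X * (q + p *+ c)) ->
  eqX N (p * (1 - c%:R *: 'X)) (r + 'X * q).
Proof.
move=> h; have -> : p * (1 - c%:R *: 'X) = p - 'X * (p *+ c) by rewrite scaler_nat; ring.
apply: eqX_trans (eqXB h (eqX_refl ('X * (p *+ c)))) _.
by apply: eqX_eq; ring.
Qed.
End TruncatedEquality.

Lemma sum_if (V : nmodType) (a b t : nat) (A B : V) : (a <= t < b)%N ->
  \sum_(a <= x < b) (if t == x then A else B) = A + B *+ (b - a).-1.
Proof.
move=> /andP[ha hb].
rewrite (big_cat_nat (n := t) ha (ltnW hb)) (big_ltn hb) eqxx.
rewrite (eq_big_nat _ _ (F2 := fun _ => B)) => [|x /andP[_ hx]]; last first.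
  by case: eqP => // ?; lia.
rewrite (@eq_big_nat _ _ _ t.+1 b _ (fun _ => B)) => [|x /andP[hx _]]; last first.
  by case: eqP => // ?; lia.
by rewrite !sumr_const_nat /= addrCA -mulrnDr; congr (_ + _ *+ _); lia.
Qed.

(* The denominator, regrouped along the phases of the recursion: the new
   blocks 1..m-2 (and a trivial factor for 0), the tail, the final factor. *)
Lemma denom_split m k : (1 < m <= k)%N -> denom m k =
  \prod_(0 <= i < m.-1) (1 - i%:R *: 'X) *
  ((1 - m.-1%:R *: 'X) ^+ (k - m).+1 * (1 - m%:R *: 'X)).
Proof.
case: m => [|[|m]] // /andP[_ hk]; rewrite /denom /=.
rewrite big_nat_recr //= (big_ltn (ltn0Sn m)) scale0r subr0 mul1r exprS.
ring.
Qed.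

Section GeneratingFunction.
Variables m N : nat.

Definition gf M u : {poly int} := \poly_(i < N) (ncompletions m i M u)%:Z.

Lemma gf_rec M u : eqX N (gf M u) ((u == [::])%:R +
  'X * \sum_(1 <= x < (minn M.+1 m).+1) gf (maxn M x) (match_next u x)).
Proof.
move=> i hi; rewrite coefD coefXM coef_sum coef_poly hi.
case: i hi => [|i] hi /=; first by case: (u == [::]); rewrite ?coef1 ?coef0 addr0.
have -> : ((u == [::])%:R : {poly int})`_i.+1 = 0 by case: (u == [::]); rewrite ?coef1 ?coef0.
rewrite add0r -natz natr_sum; apply: eq_bigr => x _.
by rewrite coef_poly (ltnW hi) natz.
Qed.

(* Maximum m, pattern matched: every letter 1..m is free. *)
Lemma gf_full_nil : eqX N (gf m [::] * (1 - m%:R *: 'X)) 1.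
Proof.
have rec : eqX N (gf m [::]) (1 + 'X * (0 + gf m [::] *+ m)).
  apply: eqX_trans (gf_rec _ _) (eqX_eq _); congr (_ + _ * _).
  rewrite add0r (eq_big_nat _ _ (F2 := fun _ => gf m [::])) => [|x hx].
    by rewrite sumr_const_nat (minn_idPr (leqnSn m)) subn1.
  by rewrite (_ : maxn m x = m) //; lia.
by apply: eqX_trans (eqX_solve rec) (eqX_eq _); rewrite mulr0 addr0.
Qed.

(* Maximum m, pattern t :: u pending: one letter advances the match. *)
Lemma gf_full_cons t u : (0 < t <= m)%N ->
  eqX N (gf m (t :: u) * (1 - m.-1%:R *: 'X)) ('X * gf m u).
Proof.
move=> ht.
have rec : eqX N (gf m (t :: u)) (0 + 'X * (gf m u + gf m (t :: u) *+ m.-1)).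
  apply: eqX_trans (gf_rec _ _) (eqX_eq _); congr (_ + _ * _).
  rewrite (eq_big_nat _ _ (F2 := fun x => if t == x then gf m u else gf m (t :: u))).
    by rewrite sum_if; [congr (_ + _ *+ _) | ]; lia.
  by move=> x hx; rewrite (_ : maxn m x = m) /=; [case: (t == x) | lia].
by apply: eqX_trans (eqX_solve rec) (eqX_eq _); rewrite add0r.
Qed.

(* Maximum M, next pattern letter M+1: only M+1 changes the state. *)
Lemma gf_new_block M u : (M < m)%N ->
  eqX N (gf M (M.+1 :: u) * (1 - M%:R *: 'X)) ('X * gf M.+1 u).
Proof.
move=> hM.
have rec : eqX N (gf M (M.+1 :: u)) (0 + 'X * (gf M.+1 u + gf M (M.+1 :: u) *+ M)).
  apply: eqX_trans (gf_rec _ _) (eqX_eq _); congr (_ + _ * _).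
  rewrite (eq_big_nat _ _ (F2 := fun x => if M.+1 == x then gf M.+1 u else gf M (M.+1 :: u))).
    by rewrite sum_if; [congr (_ + _ *+ _) | ]; lia.
  move=> x hx /=; case: eqP => [<- | ne]; congr gf; lia.
by apply: eqX_trans (eqX_solve rec) (eqX_eq _); rewrite add0r.
Qed.

(* Maximum m-1, next pattern letter t < m: the letter t advances the match
   and the letter m raises the maximum to m. *)
Lemma gf_top_pending t u : (0 < t < m)%N ->
  eqX N (gf m.-1 (t :: u) * (1 - m.-2%:R *: 'X)) ('X * (gf m.-1 u + gf m (t :: u))).
Proof.
move=> ht.
have rec : eqX N (gf m.-1 (t :: u))
    (0 + 'X * ((gf m.-1 u + gf m (t :: u)) + gf m.-1 (t :: u) *+ m.-2)).
  apply: eqX_trans (gf_rec _ _) (eqX_eq _); congr (_ + _ * _).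
  have -> : minn m.-1.+1 m = m by lia.
  rewrite big_nat_recr /=; last by lia.
  have -> : maxn m.-1 m = m by lia.
  have -> : (t == m) = false by apply/eqP; lia.
  rewrite (eq_big_nat _ _ (F2 := fun x => if t == x then gf m.-1 u else gf m.-1 (t :: u))).
    rewrite sum_if; last by lia.
    rewrite addrAC (_ : (m - 1).-1 = m.-2) //; lia.
  by move=> x hx; rewrite (_ : maxn m.-1 x = m.-1) /=; [case: (t == x) | lia].
by apply: eqX_trans (eqX_solve rec) (eqX_eq _); rewrite add0r.
Qed.

Lemma gf_full u : all (fun t => 0 < t <= m)%N u ->
  eqX N (gf m u * ((1 - m.-1%:R *: 'X) ^+ size u * (1 - m%:R *: 'X))) ('X ^+ size u).
Proof.
elim: u => [_ | t u IH /= /andP[ht hu]]; first by rewrite !expr0 mul1r; apply: gf_full_nil.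
set L := 1 - _ *: 'X; set K := 1 - _ *: 'X.
have -> : gf m (t :: u) * (L ^+ (size u).+1 * K) = gf m (t :: u) * L * (L ^+ size u * K).
  by rewrite exprS; ring.
apply: eqX_trans (eqXMr _ (gf_full_cons u ht)) _.
rewrite -mulrA exprS; exact: eqXMl (IH hu).
Qed.

(* While the letter m is still to be matched, the maximum being m-1 or m
   makes no difference: both satisfy the same equations. *)
Lemma gf_max_irrelevant u : all (fun t => 0 < t <= m)%N u -> m \in u ->
  eqX N (gf m.-1 u) (gf m u).
Proof.
elim: u => [|t u IH] //= /andP[ht hu]; rewrite in_cons.
case: (eqVneq t m) => [tm _ | mt /= mu]; first subst t.
  have := gf_new_block u (M := m.-1); rewrite prednK; last by case/andP: ht.
  by move/(_ (leqnn _))/eqX_cancel; apply; apply: gf_full_cons.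
have ht' : (0 < t < m)%N by case/andP: ht => t0 tm; rewrite t0 ltn_neqAle mt.
apply: (eqX_cancel (c := m.-2) (r := 'X * (gf m u + gf m (t :: u)))).
  exact: eqX_trans (gf_top_pending u ht') (eqXMl _ (eqXD (IH hu mu) (eqX_refl _))).
have -> : (1 - m.-2%:R *: 'X) = (1 - m.-1%:R *: 'X) + 'X :> {poly int}.
  have e : m.-1 = (m.-2 + 1)%N by lia.
  by rewrite [in RHS]e natrD scalerDl scale1r; ring.
rewrite mulrDr; apply: eqX_trans (eqXD (gf_full_cons u ht) (eqX_refl _)) (eqX_eq _).
by rewrite mulrDr [gf m (t :: u) * _]mulrC.
Qed.

Lemma gf_prefix tau : (forall i, 1 <= i <= m.-1 -> nth 0 tau i.-1 = i)%N ->
  forall j, (j <= m.-1)%N ->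
  eqX N (gf 0 tau * \prod_(0 <= i < j) (1 - i%:R *: 'X)) ('X ^+ j * gf j (drop j tau)).
Proof.
move=> pre; elim=> [|j IH] hj; first by rewrite big_geq // drop0 expr0 mulr1 mul1r.
have tau_j : nth 0%N tau j = j.+1 by apply: (pre j.+1); lia.
have hs : (j < size tau)%N by rewrite ltnNge; apply/negP => /(nth_default 0%N); rewrite tau_j.
rewrite big_nat_recr //= mulrA; apply: eqX_trans (eqXMr _ (IH (ltnW hj))) _.
rewrite (drop_nth 0%N hs) tau_j.
rewrite -mulrA exprSr -mulrA; apply: eqXMl.
by apply: gf_new_block; lia.
Qed.

Lemma gf_pattern tau : (1 < m)%N -> is_rgw tau -> nblocks tau = m ->
  (forall i, 1 <= i <= m.-1 -> nth 0 tau i.-1 = i)%N ->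
  eqX N (gf 0 tau * denom m (size tau)) ('X ^+ size tau).
Proof.
move=> m_gt1 ht hn pre.
have letters : all (fun t => 0 < t <= m)%N tau.
  by apply/allP => x xt; rewrite (@rgw_pos 0 tau ht) //= -hn mem_nblocks.
have m_notin_head : m \notin take m.-1 tau.
  apply/(nthP 0%N) => -[i]; rewrite size_take_min => hi.
  rewrite nth_take; last by lia.
  by rewrite -[i]/(i.+1.-1) pre; lia.
have m_in_tail : m \in drop m.-1 tau.
  have := mem_rgw_blocks ht (_ : 0 < m <= nblocks tau)%N; rewrite hn => /(_ ltac:(lia)).
  by rewrite -{1}(cat_take_drop m.-1 tau) mem_cat (negbTE m_notin_head).
have size_ge : (m <= size tau)%N.
  have : (0 < size (drop m.-1 tau))%N by case: (drop _ _) m_in_tail.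
  by rewrite size_drop; lia.
have letters_tail : all (fun t => 0 < t <= m)%N (drop m.-1 tau).
  by move: letters; rewrite -{1}(cat_take_drop m.-1 tau) all_cat => /andP[].
rewrite denom_split; last by rewrite m_gt1.
rewrite [gf 0 tau * _]mulrA.
apply: eqX_trans (eqXMr _ (gf_prefix pre (leqnn _))) _.
rewrite -mulrA.
apply: eqX_trans (eqXMl _ (eqXMr _ (gf_max_irrelevant letters_tail m_in_tail))) _.
have size_tail : size (drop m.-1 tau) = (size tau - m).+1 by rewrite size_drop; lia.
rewrite -size_tail; apply: eqX_trans (eqXMl _ (gf_full letters_tail)) (eqX_eq _).
by rewrite -exprD size_tail; congr (_ ^+ _); lia.
Qed.
End GeneratingFunction.

Theorem theorem2p8 (m : nat) (tau : seq nat) :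
  (2 <= m)%N -> is_rgw tau -> nblocks tau = m ->
  (forall i : nat, (1 <= i <= m.-1)%N -> nth 0%N tau i.-1 = i) ->
  forall n : nat,
    (\poly_(i < n.+1) ((pn i [:: incr m])%:Z - (pn i [:: incr m; tau])%:Z)
       * denom m (size tau))`_n = (n == size tau)%:R.
Proof.
move=> m_ge2 ht hn pre n.
have -> : \poly_(i < n.+1) ((pn i [:: incr m])%:Z - (pn i [:: incr m; tau])%:Z) =
    gf m n.+1 0 tau.
  by apply: eq_poly => i _; rewrite (pn_difference i ht hn) PoszD addrK.
by rewrite (gf_pattern m_ge2 ht hn pre (ltnSn n)) coefXn.
Qed.
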